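(* Let $s,t\ge1$ and $k=s+t+4\le n$. Let $Q(s,t)$ be the graph on $k$ vertices consisting of a $4$-cycle $v_1v_2v_3v_4v_1$ with $s$ pendant vertices attached to $v_1$ and $t$ pendant vertices attached to $v_2$, and let $Q_1$ be the graph on $k$ vertices consisting of a $4$-cycle $v_1v_2v_3v_4v_1$ with $k-4$ pendant vertices attached to $v_1$. Let $\Gamma=(K_n,Q(s,t)^-)$ and $\Gamma'=(K_n,Q_1^-)$. Then $\lambda_1(\Gamma)<\lambda_1(\Gamma')$.
   Context: For a subgraph $H$ of $K_n$, $(K_n,H^-)$ denotes the signed complete graph on $n$ vertices whose negative edges are exactly the edges of $H$ (all other edges positive); its adjacency matrix has entry $-1$ for negative edges, $+1$ for positive edges and $0$ on the diagonal. $\lambda_1(\Gamma)$ (the index) is the largest eigenvalue of the adjacency matrix. *)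

From HB Require Import structures.
From mathcomp Require Import all_boot all_order all_algebra.
From mathcomp Require Import boolp classical_sets reals.
Set Implicit Arguments. Unset Strict Implicit. Unset Printing Implicit Defensive.
Import Order.TTheory GRing.Theory Num.Theory.
Local Open Scope ring_scope.

(* A simple graph on vertex set {0,..,n-1} is given by an edge relation on nat
   (symmetric by construction below); vertices are 'I_n. *)

(* Adjacency matrix of the signed complete graph (K_n, H^-): entry -1 on edges
   of H, +1 on other off-diagonal pairs, 0 on the diagonal. *)
Definition signed_adj (R : pzRingType) (n : nat) (H : nat -> nat -> bool) : 'M[R]_n :=
  \matrix_(i < n, j < n)
    (if i == j then 0 else if H i j then -1 else 1).

(* Index: the largest eigenvalue (the set of eigenvalues is finite, and nonempty
   for symmetric real matrices of size >= 1, so the sup is a max). *)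
Definition lambda1 (R : realType) (n : nat) (A : 'M[R]_n) : R :=
  sup [set a : R | eigenvalue A a].

Definition sym_edge (E : nat -> nat -> bool) : nat -> nat -> bool :=
  fun i j => E i j || E j i.

(* Q(s,t): 4-cycle v1 v2 v3 v4 v1 labelled 0 1 2 3, s pendant vertices
   4,...,s+3 attached to v1 = 0, and t pendant vertices s+4,...,s+t+3
   attached to v2 = 1.  Vertices >= s+t+4 are isolated (not in H). *)
Definition Qst_base (s t : nat) (i j : nat) : bool :=
  [|| (i == 0%N) && (j == 1%N), (i == 1%N) && (j == 2%N),
      (i == 2%N) && (j == 3%N), (i == 3%N) && (j == 0%N),
      (i == 0%N) && (4 <= j < s + 4)%N
    | (i == 1%N) && (s + 4 <= j < s + t + 4)%N].
Definition Qst (s t : nat) := sym_edge (Qst_base s t).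

(* Q_1 on k vertices: 4-cycle 0 1 2 3 0 with k-4 pendant vertices 4,...,k-1
   attached to v1 = 0. *)
Definition Q1_base (k : nat) (i j : nat) : bool :=
  [|| (i == 0%N) && (j == 1%N), (i == 1%N) && (j == 2%N),
      (i == 2%N) && (j == 3%N), (i == 3%N) && (j == 0%N)
    | (i == 0%N) && (4 <= j < k)%N].
Definition Q1 (k : nat) := sym_edge (Q1_base k).

From HB Require Import structures.
From mathcomp Require Import all_boot all_order all_algebra.
From mathcomp Require Import boolp classical_sets reals.
From mathcomp Require Import zify ring lra polyrcf.
Import Order.TTheory GRing.Theory Num.Theory.
Local Open Scope ring_scope.
Set Implicit Arguments. Unset Strict Implicit. Unset Printing Implicit Defensive.

(* Write L = λ + 1.  The adjacency matrix of (K_n, H^-) is J - I - 2 A(H), so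
   a λ-eigenvector x satisfies L x_i = Σ_j x_j - 2 Σ_{j ~ i} x_j.  Summing
   these equations over the classes of Q(s,t) (the four cycle vertices, the
   two sets of pendant vertices and the m = n - k vertices outside Q(s,t)) shows
   that L is a root of a degree-7 polynomial charQst whenever L ≠ 0.
   Conversely Q_1 = Q(s+t,0), and every root r ≥ 3 of the quintic charQ1(s+t)
   gives an explicit class-constant eigenvector of Γ' for r - 1.  Since
   charQst = L² charQ1(s+t) + 8st(L² - 4)(L² - 2m), charQ1(s+t) is negative at
   λ1(Γ) + 1 when λ1(Γ) ≥ s + t + m, so it has a root beyond λ1(Γ) + 1; for
   smaller λ1(Γ), use that charQ1(s+t) ≤ 0 at s + t + m + 1. *)

Definition nbr_sum (V : nmodType) (H : nat -> nat -> bool) (n : nat)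
    (F : nat -> V) (i : nat) : V :=
  \sum_(0 <= j < n) (if H j i then F j else 0).

Lemma signed_adj_mulmx (R : comPzRingType) n (H : nat -> nat -> bool)
    (v : 'rV[R]_n) (i : 'I_n) :
  H i i = false ->
  (v *m signed_adj R n H) 0 i =
  \sum_(j < n) v 0 j - v 0 i - 2 * \sum_(j < n) (if H j i then v 0 j else 0).
Proof.
move=> Hii; rewrite mxE (eq_bigr (fun j => v 0 j - (if j == i then v 0 j else 0)
  - 2 * (if H j i then v 0 j else 0))); last first.
  move=> j _; rewrite !mxE; case: eqP => [->|_]; first by rewrite Hii; ring.
  by case: (H j i); ring.
by rewrite !big_split /= !sumrN mulr_sumr -big_mkcond /= big_pred1_eq.
Qed.

Lemma signed_adj_eigenvalueP (R : fieldType) n (H : nat -> nat -> bool) (a : R) :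
  (forall i, H i i = false) ->
  eigenvalue (signed_adj R n H) a <->
  exists2 F : nat -> R, exists2 i, (i < n)%N & F i != 0 &
    forall i, (i < n)%N -> (a + 1) * F i =
      \sum_(0 <= j < n) F j - 2 * nbr_sum H n F i.
Proof.
move=> Hirr; have rowE (v : 'rV[R]_n) (F : nat -> R) i :
    (forall j : 'I_n, v 0 j = F j) ->
    (v *m signed_adj R n H) 0 i = \sum_(0 <= j < n) F j - F i - 2 * nbr_sum H n F i.
  move=> vF; rewrite signed_adj_mulmx // vF /nbr_sum !big_mkord.
  by congr (_ - _ - 2 * _); apply: eq_bigr => j _; rewrite vF.
split.
- case/eigenvalueP => v va v_neq0.
  pose F j := oapp (v 0) 0 (insub j : option 'I_n).
  have vF (j : 'I_n) : v 0 j = F j by rewrite /F valK.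
  exists F.
    have [j vj] : exists j, v 0 j != 0.
      apply/existsP; apply: contraNT v_neq0 => /existsPn v0.
      by apply/eqP/rowP => j; rewrite mxE; apply/eqP; rewrite -[_ == _]negbK v0.
    by exists j; rewrite // -vF.
  move=> i ltin; have := congr1 (fun M : 'rV_n => M 0 (Ordinal ltin)) va.
  by rewrite (rowE _ F) // !mxE vF /= => h; rewrite mulrDl mul1r -h; ring.
- case=> F [i ltin Fi] eqF; apply/eigenvalueP.
  exists (\row_(j < n) F j).
    apply/rowP => j; rewrite (rowE _ F) => [|k]; rewrite !mxE //.
    have := eqF _ (ltn_ord j); rewrite mulrDl mul1r => eqFj.
    by apply: (addIr (F j)); rewrite eqFj; ring.
  by apply: contra Fi => /eqP/rowP/(_ (Ordinal ltin)); rewrite !mxE => ->.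
Qed.

Lemma eigenvalue_rootsR (R : rcfType) n (A : 'M[R]_n) a :
  eigenvalue A a = (a \in rootsR (char_poly A)).
Proof.
rewrite eigenvalue_root_char.
have /roots_onP := roots_on_rootsR (monic_neq0 (char_poly_monic A)).
by apply; rewrite in_itv.
Qed.

Lemma seq_max (R : realDomainType) (l : seq R) a : a \in l ->
  exists2 b, b \in l & forall x, x \in l -> x <= b.
Proof.
move=> al; exists (\big[Num.max/a]_(x <- l) x); last first.
  by move=> x xl; exact: le_bigmax_seq.
rewrite big_seq; elim/big_rec: _ => // x b xl bl.
by rewrite /Num.max; case: ifP.
Qed.

Section LargestEigenvalue.
Variables (R : realType) (n : nat) (A : 'M[R]_n).

Lemma lambda1_ge a : eigenvalue A a -> a <= lambda1 A.
Proof.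
move=> Aa; apply: sup_upper_bound => //; split; first by exists a.
move: Aa; rewrite eigenvalue_rootsR => /seq_max[b _ bmax].
by exists b => x; rewrite /= eigenvalue_rootsR; exact: bmax.
Qed.

Lemma lambda1_eigenvalue_or0 : eigenvalue A (lambda1 A) \/ lambda1 A = 0.
Proof.
have [[a Aa]|noeig] := pselect (exists a, eigenvalue A a); last first.
  right; rewrite /lambda1 (_ : [set a | _] = set0)%classic ?sup0 //.
  by apply/seteqP; split => // a Aa; apply: noeig; exists a.
left; move: (Aa); rewrite eigenvalue_rootsR => al; have [b bl bmax] := seq_max al.
suff -> : lambda1 A = b by rewrite eigenvalue_rootsR.
apply/eqP; rewrite eq_le lambda1_ge ?eigenvalue_rootsR // andbT.
by apply: ge_sup; [exists a | move=> x; rewrite /= eigenvalue_rootsR; exact: bmax].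
Qed.
End LargestEigenvalue.

Lemma Qst_sym s t i j : Qst s t i j = Qst s t j i.
Proof. by rewrite /Qst /sym_edge orbC. Qed.

Lemma Qst_base_ge4 s t i j : (4 <= i)%N -> Qst_base s t i j = false.
Proof. by case: i => [|[|[|[|i]]]]. Qed.

Lemma Qst_ge4 s t i j : (4 <= j)%N -> Qst s t i j =
  ((i == 0%N) && (4 <= j < s + 4)%N) || ((i == 1%N) && (s + 4 <= j < s + t + 4)%N).
Proof.
move=> j_ge4; rewrite /Qst /sym_edge (@Qst_base_ge4 s t j i) // orbF.
by case: j j_ge4 => [|[|[|[|j]]]] // _; rewrite /Qst_base /= !andbF.
Qed.

Lemma Qst_cycle s t i j : (i < 4)%N -> (j < 4)%N -> Qst s t i j = (odd i != odd j).
Proof.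
have small k : (k < 4)%N -> (s + 4 <= k)%N = false.
  by move=> k_lt4; rewrite leqNgt (leq_trans k_lt4) ?leq_addl.
by case: i j => [|[|[|[|i]]]] [|[|[|[|j]]]] //= _ _;
  rewrite /Qst /sym_edge /Qst_base /= ?small.
Qed.

Lemma Qst_pendant1 s t i j : (4 <= j < s + 4)%N -> Qst s t i j = (i == 0%N).
Proof. by move=> j_in; rewrite Qst_ge4; lia. Qed.

Lemma Qst_pendant2 s t i j : (s + 4 <= j < s + t + 4)%N -> Qst s t i j = (i == 1%N).
Proof. by move=> j_in; rewrite Qst_ge4; lia. Qed.

Lemma Qst_isolated s t i j : (s + t + 4 <= j)%N -> Qst s t i j = false.
Proof. by move=> j_ge; rewrite Qst_ge4; lia. Qed.

Lemma Qst_irr s t i : Qst s t i i = false.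
Proof.
have [i_lt4|i_ge4] := ltnP i 4; first by rewrite Qst_cycle // eqxx.
by rewrite Qst_ge4 //; case: i i_ge4 => [|[|[|[|i]]]].
Qed.

Section QstNeighbourSums.
Variables (V : nmodType) (s t N : nat).
Hypothesis leN : (s + t + 4 <= N)%N.
Implicit Type F : nat -> V.

Lemma sum_Qst_classes F : \sum_(0 <= j < N) F j =
  F 0%N + F 1%N + F 2%N + F 3%N + \sum_(4 <= j < s + 4) F j
  + \sum_(s + 4 <= j < s + t + 4) F j + \sum_(s + t + 4 <= j < N) F j.
Proof.
rewrite (@big_cat_nat _ _ _ (s + t + 4)) //= (@big_cat_nat _ _ _ (s + 4)) //=; try lia.
rewrite (@big_cat_nat _ _ _ 4) //=; try lia.
by rewrite !big_nat_recl //= big_geq // addr0 !addrA.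
Qed.

Lemma nbr_sum_QstE F i : nbr_sum (Qst s t) N F i =
  (if Qst s t 0 i then F 0%N else 0) + (if Qst s t 1 i then F 1%N else 0)
  + (if Qst s t 2 i then F 2%N else 0) + (if Qst s t 3 i then F 3%N else 0)
  + (if i == 0%N then \sum_(4 <= j < s + 4) F j else 0)
  + (if i == 1%N then \sum_(s + 4 <= j < s + t + 4) F j else 0).
Proof.
have sum_if (b : bool) m n (G : nat -> V) :
    \sum_(m <= j < n) (if b then G j else 0) = if b then \sum_(m <= j < n) G j else 0.
  by case: b; rewrite // big1.
rewrite /nbr_sum sum_Qst_classes (@eq_big_nat _ _ _ (s + t + 4) N _ (fun => 0)).
  rewrite big1_eq addr0 -!sum_if; congr (_ + _ + _); apply: eq_big_nat => j j_in.
    by rewrite Qst_sym Qst_pendant1.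
  by rewrite Qst_sym Qst_pendant2.
by move=> j /andP[j_ge _]; rewrite Qst_sym Qst_isolated.
Qed.

Lemma nbr_sum_Qst0 F :
  nbr_sum (Qst s t) N F 0 = F 1%N + F 3%N + \sum_(4 <= j < s + 4) F j.
Proof. by rewrite nbr_sum_QstE !Qst_cycle //= !(addr0, add0r). Qed.

Lemma nbr_sum_Qst1 F :
  nbr_sum (Qst s t) N F 1 = F 0%N + F 2%N + \sum_(s + 4 <= j < s + t + 4) F j.
Proof. by rewrite nbr_sum_QstE !Qst_cycle //= !(addr0, add0r). Qed.

Lemma nbr_sum_Qst2 F : nbr_sum (Qst s t) N F 2 = F 1%N + F 3%N.
Proof. by rewrite nbr_sum_QstE !Qst_cycle //= !(addr0, add0r). Qed.

Lemma nbr_sum_Qst3 F : nbr_sum (Qst s t) N F 3 = F 0%N + F 2%N.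
Proof. by rewrite nbr_sum_QstE !Qst_cycle //= !(addr0, add0r). Qed.

Lemma nbr_sum_Qst_pendant1 F i : (4 <= i < s + 4)%N -> nbr_sum (Qst s t) N F i = F 0%N.
Proof.
move=> i_in; rewrite nbr_sum_QstE !Qst_pendant1 //=.
by rewrite !ifF ?addr0 //; lia.
Qed.

Lemma nbr_sum_Qst_pendant2 F i :
  (s + 4 <= i < s + t + 4)%N -> nbr_sum (Qst s t) N F i = F 1%N.
Proof.
move=> i_in; rewrite nbr_sum_QstE !Qst_pendant2 //=.
by rewrite !ifF ?add0r ?addr0 //; lia.
Qed.

Lemma nbr_sum_Qst_isolated F i : (s + t + 4 <= i)%N -> nbr_sum (Qst s t) N F i = 0.
Proof.
move=> i_ge; rewrite nbr_sum_QstE !Qst_isolated //=.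
by rewrite !ifF ?addr0 //; lia.
Qed.
End QstNeighbourSums.

(* L stands for λ + 1, and m for the number n - (s + t + 4) of vertices
   outside Q(s,t). *)
Definition charQst (R : comPzRingType) (s t m L : R) : R :=
  L ^+ 7 - (s + t + m + 4%:R) * L ^+ 6
  + (8%:R * s * t + 4%:R * s * m + 12%:R * s + 4%:R * t * m + 12%:R * t
     + 16%:R * m) * L ^+ 4
  - (16%:R * s * t * m + 32%:R * s * t + 32%:R * s * m + 32%:R * t * m) * L ^+ 2
  + 64%:R * s * t * m.

Definition charQ1 (R : comPzRingType) (p m L : R) : R :=
  L ^+ 5 - (p + m + 4%:R) * L ^+ 4
  + 4%:R * (p * m + 3%:R * p + 4%:R * m) * L ^+ 2 - 32%:R * p * m.

Lemma charQst_quotient_trivial (R : idomainType) (s t m L u w y z X1 X2 X3 S : R) :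
  L * u = S - 2 * (w + z + X1) ->
  L * w = S - 2 * (u + y + X2) ->
  L * y = S - 2 * (w + z) ->
  L * z = S - 2 * (u + y) ->
  L * X1 = s * (S - 2 * u) ->
  L * X2 = t * (S - 2 * w) ->
  L * X3 = m * S ->
  S = u + w + y + z + X1 + X2 + X3 ->
  charQst s t m L != 0 -> [/\ u = 0, w = 0, y = 0, z = 0 & S = 0].
Proof.
pose d0 := L * u - (S - 2 * (w + z + X1)).
pose d1 := L * w - (S - 2 * (u + y + X2)).
pose d2 := L * y - (S - 2 * (w + z)).
pose d3 := L * z - (S - 2 * (u + y)).
pose d4 := L * X1 - s * (S - 2 * u).
pose d5 := L * X2 - t * (S - 2 * w).
pose d6 := L * X3 - m * S.
pose d7 := S - (u + w + y + z + X1 + X2 + X3).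
move=> e0 e1 e2 e3 e4 e5 e6 e7 nz.
have [d0E d1E d2E d3E] : [/\ d0 = 0, d1 = 0, d2 = 0 & d3 = 0].
  by split; rewrite /d0 /d1 /d2 /d3 ?e0 ?e1 ?e2 ?e3 subrr.
have [d4E d5E d6E d7E] : [/\ d4 = 0, d5 = 0, d6 = 0 & d7 = 0].
  by split; rewrite /d4 /d5 /d6 /d7 ?e4 ?e5 ?e6 -?e7 subrr.
(* Eliminating X1, X2, X3 leaves a 5x5 linear system in (u, w, y, z, S) with
   determinant charQst s t m L; the multipliers below are the rows of its
   adjugate. *)
have elim x c0 c1 c2 c3 c4 :
    charQst s t m L * x = c0 * (L * d0 - 2 * d4) + c1 * (L * d1 - 2 * d5)
      + c2 * d2 + c3 * d3 + c4 * (L * d7 + d4 + d5 + d6) -> x = 0.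
  rewrite d0E d1E d2E d3E d4E d5E d6E d7E !(mulr0, addr0, subr0) => /eqP.
  by rewrite mulf_eq0 (negbTE nz) => /eqP.
split.
- apply: (elim _
    (L^+5 - L^+4 * s - L^+4 * t - L^+4 * m - 3%:R * L^+4 + 4%:R * L^+2 * s * t
      + 8%:R * L^+2 * s + 4%:R * L^+2 * t * m + 8%:R * L^+2 * t + 8%:R * L^+2 * m
      - 16%:R * s * t - 16%:R * t * m)
    (- L^+4 + 2%:R * L^+3 * m + 4%:R * L^+2 * s * t + 4%:R * L^+2 * s
      + 4%:R * L^+2 * t - 16%:R * s * t)
    (L^+5 - 2%:R * L^+4 * s - 4%:R * L^+3 * t - 8%:R * L^+3 * m + 16%:R * L * t * m)
    (- L^+5 + 2%:R * L^+4 * t + 2%:R * L^+4 * m + 4%:R * L^+3 * s - 8%:R * L^+2 * t * m)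
    (L^+5 - 2%:R * L^+4 * s - 4%:R * L^+4 + 8%:R * L^+2 * s * t + 16%:R * L^+2 * s
      + 8%:R * L^+2 * t - 32%:R * s * t)).
  by rewrite /charQst /d0 /d1 /d2 /d3 /d4 /d5 /d6 /d7; ring.
- apply: (elim _
    (- L^+4 + 2%:R * L^+3 * m + 4%:R * L^+2 * s * t + 4%:R * L^+2 * s
      + 4%:R * L^+2 * t - 16%:R * s * t)
    (L^+5 - L^+4 * s - L^+4 * t - L^+4 * m - 3%:R * L^+4 + 4%:R * L^+2 * s * t
      + 4%:R * L^+2 * s * m + 8%:R * L^+2 * s + 8%:R * L^+2 * t + 8%:R * L^+2 * m
      - 16%:R * s * t - 16%:R * s * m)
    (- L^+5 + 2%:R * L^+4 * s + 2%:R * L^+4 * m + 4%:R * L^+3 * t - 8%:R * L^+2 * s * m)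
    (L^+5 - 2%:R * L^+4 * t - 4%:R * L^+3 * s - 8%:R * L^+3 * m + 16%:R * L * s * m)
    (L^+5 - 2%:R * L^+4 * t - 4%:R * L^+4 + 8%:R * L^+2 * s * t + 8%:R * L^+2 * s
      + 16%:R * L^+2 * t - 32%:R * s * t)).
  by rewrite /charQst /d0 /d1 /d2 /d3 /d4 /d5 /d6 /d7; ring.
- apply: (elim _
    (L^+4 - 2%:R * L^+3 * s - 4%:R * L^+2 * t - 8%:R * L^+2 * m + 16%:R * t * m)
    (- L^+4 + 2%:R * L^+3 * s + 2%:R * L^+3 * m + 4%:R * L^+2 * t - 8%:R * L * s * m)
    (L^+6 - L^+5 * s - L^+5 * t - L^+5 * m - 3%:R * L^+5 + 8%:R * L^+3 * s * t
      + 4%:R * L^+3 * s * m + 4%:R * L^+3 * t * m + 8%:R * L^+3 * t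
      + 8%:R * L^+3 * m - 16%:R * L * s * t * m - 16%:R * L * t * m)
    (- L^+5 + 2%:R * L^+4 * s + 2%:R * L^+4 * t + 2%:R * L^+4 * m
      - 16%:R * L^+2 * s * t - 8%:R * L^+2 * s * m - 8%:R * L^+2 * t * m
      + 32%:R * s * t * m)
    (L^+5 - 4%:R * L^+4 - 4%:R * L^+3 * s + 8%:R * L^+2 * t)).
  by rewrite /charQst /d0 /d1 /d2 /d3 /d4 /d5 /d6 /d7; ring.
- apply: (elim _
    (- L^+4 + 2%:R * L^+3 * t + 2%:R * L^+3 * m + 4%:R * L^+2 * s - 8%:R * L * t * m)
    (L^+4 - 2%:R * L^+3 * t - 4%:R * L^+2 * s - 8%:R * L^+2 * m + 16%:R * s * m)
    (- L^+5 + 2%:R * L^+4 * s + 2%:R * L^+4 * t + 2%:R * L^+4 * m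
      - 16%:R * L^+2 * s * t - 8%:R * L^+2 * s * m - 8%:R * L^+2 * t * m
      + 32%:R * s * t * m)
    (L^+6 - L^+5 * s - L^+5 * t - L^+5 * m - 3%:R * L^+5 + 8%:R * L^+3 * s * t
      + 4%:R * L^+3 * s * m + 8%:R * L^+3 * s + 4%:R * L^+3 * t * m
      + 8%:R * L^+3 * m - 16%:R * L * s * t * m - 16%:R * L * s * m)
    (L^+5 - 4%:R * L^+4 - 4%:R * L^+3 * t + 8%:R * L^+2 * s)).
  by rewrite /charQst /d0 /d1 /d2 /d3 /d4 /d5 /d6 /d7; ring.
- apply: (elim _
    (L^+5 - 2%:R * L^+4 * s - 4%:R * L^+4 + 8%:R * L^+2 * s * t + 16%:R * L^+2 * s
      + 8%:R * L^+2 * t - 32%:R * s * t)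
    (L^+5 - 2%:R * L^+4 * t - 4%:R * L^+4 + 8%:R * L^+2 * s * t + 8%:R * L^+2 * s
      + 16%:R * L^+2 * t - 32%:R * s * t)
    (L^+6 - 4%:R * L^+5 - 4%:R * L^+4 * s + 8%:R * L^+3 * t)
    (L^+6 - 4%:R * L^+5 - 4%:R * L^+4 * t + 8%:R * L^+3 * s)
    (L^+6 - 4%:R * L^+4 * s - 4%:R * L^+4 * t - 16%:R * L^+4 + 16%:R * L^+2 * s * t
      + 32%:R * L^+2 * s + 32%:R * L^+2 * t - 64%:R * s * t)).
  by rewrite /charQst /d0 /d1 /d2 /d3 /d4 /d5 /d6 /d7; ring.
Qed.

Section CharQInequalities.
Variable R : realFieldType.

Lemma charQst_split (s t m L : R) : charQst s t m L =
  L ^+ 2 * charQ1 (s + t) m L + 8%:R * s * t * (L ^+ 2 - 4%:R) * (L ^+ 2 - 2 * m).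
Proof. by rewrite /charQst /charQ1; ring. Qed.

Lemma charQ1_lt0_of_charQst_root (s t m L : R) :
  1 <= s -> 1 <= t -> 0 <= m -> m + 3%:R <= L ->
  charQst s t m L = 0 -> charQ1 (s + t) m L < 0.
Proof.
move=> s_ge1 t_ge1 m_ge0 L_ge; rewrite charQst_split => root_L.
have L2_gt0 : 0 < L ^+ 2 by rewrite expr2; nra.
have L2_gt4 : 4%:R < L ^+ 2 by rewrite expr2; nra.
have L2_gt2m : 2 * m < L ^+ 2 by rewrite expr2; nra.
have : 0 < 8%:R * s * t * (L ^+ 2 - 4%:R) * (L ^+ 2 - 2 * m).
  by rewrite !mulr_gt0 // ?subr_gt0 //; lra.
by rewrite -(pmulr_rlt0 _ L2_gt0); lra.
Qed.

Lemma charQ1_le0 (p m : R) : 2%:R <= p -> 0 <= m -> charQ1 p m (p + m + 1) <= 0.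
Proof.
move=> p_ge2 m_ge0.
have -> : charQ1 p m (p + m + 1) = - (p + m + 1) ^+ 2 *
    ((3%:R * m + p - 5%:R) ^+ 2 + 8%:R * (p - 2%:R) * (p + 1)) / 3%:R
    - 32%:R * p * m.
  by rewrite /charQ1; field.
have : 0 <= (3%:R * m + p - 5%:R) ^+ 2 + 8%:R * (p - 2%:R) * (p + 1).
  by rewrite addr_ge0 ?sqr_ge0 // !mulr_ge0 //; lra.
have := sqr_ge0 (p + m + 1); nra.
Qed.

Lemma charQ1_gt0 (p m x : R) : 2%:R <= p -> 0 <= m ->
  p + m + 4%:R + 4%:R * (p * m + 3%:R * p + 4%:R * m) <= x -> 0 < charQ1 p m x.
Proof.
move=> p_ge2 m_ge0; set X := p * m + _ + _ => x_ge.
have pm_ge0 : 0 <= p * m by nra.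
have X_ge : 6%:R + p * m <= X by rewrite /X; lra.
have x_ge2 : 2%:R <= x by lra.
have x4_ge : 16%:R <= x ^+ 4.
  have x2_ge : 4%:R <= x ^+ 2 by rewrite expr2; nra.
  by rewrite -[4%N]/(2 + 2)%N exprD; nra.
have : x ^+ 4 * (4%:R * X) <= x ^+ 4 * (x - (p + m + 4%:R)).
  by apply: ler_wpM2l; lra.
have : 0 <= 4%:R * X * x ^+ 2 by rewrite mulr_ge0 ?sqr_ge0 //; lra.
have : 32%:R * p * m < 4%:R * X * x ^+ 4 by nra.
rewrite /charQ1 -/X exprSr; nra.
Qed.
End CharQInequalities.

Lemma charQ1_root_ge (R : rcfType) (p m x : R) : 2%:R <= p -> 0 <= m ->
  charQ1 p m x <= 0 -> exists2 r, x <= r & charQ1 p m r = 0.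
Proof.
move=> p_ge2 m_ge0 qx_le0.
pose q : {poly R} := 'X^5 - (p + m + 4%:R) *: 'X^4
  + (4%:R * (p * m + 3%:R * p + 4%:R * m)) *: 'X^2 - (32%:R * p * m)%:P.
have qE y : q.[y] = charQ1 p m y.
  by rewrite /q !(hornerD, hornerN, hornerZ, hornerXn, hornerC) /charQ1; ring.
pose B := p + m + 4%:R + 4%:R * (p * m + 3%:R * p + 4%:R * m).
have qB_gt0 := charQ1_gt0 p_ge2 m_ge0 (lexx B).
have x_le : x <= B.
  by rewrite leNgt; apply/negP => /ltW /(charQ1_gt0 p_ge2 m_ge0); lra.
have [r /andP[x_le_r _] /rootP] : exists2 r, x <= r <= B & root q r.
  by apply: poly_ivt x_le _; rewrite !qE qx_le0 (ltW qB_gt0).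
by rewrite qE; exists r.
Qed.

Section QstEigenvalues.
Variables (R : fieldType) (s t N : nat).
Hypothesis leN : (s + t + 4 <= N)%N.
Local Notation m := (N - (s + t + 4))%N.

Lemma Qst_eigenvalue_charQst a : eigenvalue (signed_adj R N (Qst s t)) a ->
  a + 1 != 0 -> charQst s%:R t%:R m%:R (a + 1) = 0.
Proof.
move=> /(signed_adj_eigenvalueP _ _ (@Qst_irr s t)) [F [i0 i0_lt Fi0_neq0] eqF].
set L := a + 1 in eqF * => L_neq0; set S := \sum_(0 <= j < N) F j in eqF.
have sum_class c lo hi : (forall j, (lo <= j < hi)%N -> L * F j = c) ->
    L * \sum_(lo <= j < hi) F j = (hi - lo)%:R * c.
  by move=> eqc; rewrite mulr_sumr (eq_big_nat _ _ eqc) sumr_const_nat mulr_natl.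
have eq_pendant1 j : (4 <= j < s + 4)%N -> L * F j = S - 2 * F 0%N.
  by move=> j_in; rewrite eqF ?nbr_sum_Qst_pendant1 //; lia.
have eq_pendant2 j : (s + 4 <= j < s + t + 4)%N -> L * F j = S - 2 * F 1%N.
  by move=> j_in; rewrite eqF ?nbr_sum_Qst_pendant2 //; lia.
have eq_isolated j : (s + t + 4 <= j < N)%N -> L * F j = S.
  by case/andP=> j_ge j_lt; rewrite eqF ?nbr_sum_Qst_isolated ?mulr0 ?subr0.
have eq_v1 : L * F 0%N = S - 2 * (F 1%N + F 3%N + \sum_(4 <= j < s + 4) F j).
  by rewrite eqF ?nbr_sum_Qst0 //; lia.
have eq_v2 : L * F 1%N = S - 2 * (F 0%N + F 2%N + \sum_(s + 4 <= j < s + t + 4) F j).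
  by rewrite eqF ?nbr_sum_Qst1 //; lia.
have eq_v3 : L * F 2%N = S - 2 * (F 1%N + F 3%N) by rewrite eqF ?nbr_sum_Qst2 //; lia.
have eq_v4 : L * F 3%N = S - 2 * (F 0%N + F 2%N) by rewrite eqF ?nbr_sum_Qst3 //; lia.
have eq_X1 : L * \sum_(4 <= j < s + 4) F j = s%:R * (S - 2 * F 0%N).
  by rewrite (sum_class _ _ _ eq_pendant1) addnK.
have eq_X2 : L * \sum_(s + 4 <= j < s + t + 4) F j = t%:R * (S - 2 * F 1%N).
  by rewrite (sum_class _ _ _ eq_pendant2) (_ : s + t + 4 - (s + 4) = t)%N //; lia.
have eq_X3 : L * \sum_(s + t + 4 <= j < N) F j = m%:R * S.
  exact: sum_class.
apply/eqP; apply: contraNT Fi0_neq0 => char_neq0.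
have [v1_0 v2_0 v3_0 v4_0 S0] := charQst_quotient_trivial eq_v1 eq_v2 eq_v3 eq_v4
  eq_X1 eq_X2 eq_X3 (sum_Qst_classes leN F) char_neq0.
apply/eqP; move: i0_lt; have [i0_lt4 _|i0_ge4 i0_lt] := ltnP i0 4.
  by case: i0 i0_lt4 => [|[|[|[|]]]].
apply: (mulfI L_neq0); rewrite mulr0.
have [i0_lt1|i0_ge1] := ltnP i0 (s + 4).
  by rewrite eq_pendant1 ?v1_0 ?S0 ?i0_ge4 //; ring.
have [i0_lt2|i0_ge2] := ltnP i0 (s + t + 4).
  by rewrite eq_pendant2 ?v2_0 ?S0 ?i0_ge1 //; ring.
by rewrite eq_isolated ?i0_ge2.
Qed.

Lemma Qst_class_eigenvalue (a u w y z x1 x2 x3 S : R) :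
  S = u + w + y + z + s%:R * x1 + t%:R * x2 + m%:R * x3 ->
  (a + 1) * u = S - 2 * (w + z + s%:R * x1) ->
  (a + 1) * w = S - 2 * (u + y + t%:R * x2) ->
  (a + 1) * y = S - 2 * (w + z) ->
  (a + 1) * z = S - 2 * (u + y) ->
  (a + 1) * x1 = S - 2 * u ->
  (a + 1) * x2 = S - 2 * w ->
  (a + 1) * x3 = S ->
  [|| u != 0, w != 0, y != 0 | z != 0] ->
  eigenvalue (signed_adj R N (Qst s t)) a.
Proof.
move=> S_def eq_v1 eq_v2 eq_v3 eq_v4 eq_x1 eq_x2 eq_x3 core_neq0.
pose F j := if (j < 4)%N then nth 0 [:: u; w; y; z] j
  else if (j < s + 4)%N then x1 else if (j < s + t + 4)%N then x2 else x3.
have F_pendant1 j : (4 <= j < s + 4)%N -> F j = x1.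
  by move=> j_in; rewrite /F ifF ?ifT //; lia.
have F_pendant2 j : (s + 4 <= j < s + t + 4)%N -> F j = x2.
  by move=> j_in; rewrite /F 2?ifF ?ifT //; lia.
have F_isolated j : (s + t + 4 <= j < N)%N -> F j = x3.
  by move=> j_in; rewrite /F !ifF //; lia.
have sum_class c lo hi : (forall j, (lo <= j < hi)%N -> F j = c) ->
    \sum_(lo <= j < hi) F j = (hi - lo)%:R * c.
  by move=> eqc; rewrite (eq_big_nat _ _ eqc) sumr_const_nat mulr_natl.
have X1E : \sum_(4 <= j < s + 4) F j = s%:R * x1.
  by rewrite (sum_class _ _ _ F_pendant1) addnK.
have X2E : \sum_(s + 4 <= j < s + t + 4) F j = t%:R * x2.
  by rewrite (sum_class _ _ _ F_pendant2) (_ : s + t + 4 - (s + 4) = t)%N //; lia.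
have sumF : \sum_(0 <= j < N) F j = S.
  by rewrite (sum_Qst_classes leN) X1E X2E (sum_class _ _ _ F_isolated) S_def.
apply/(signed_adj_eigenvalueP _ _ (@Qst_irr s t)); exists F.
  by case/or4P: core_neq0 => core_neq0; [exists 0%N | exists 1%N | exists 2%N | exists 3%N];
    rewrite //; lia.
move=> i i_lt; rewrite sumF.
have [i_lt4|i_ge4] := ltnP i 4.
  case: i i_lt4 {i_lt} => [|[|[|[|]]]] // _.
  - by rewrite nbr_sum_Qst0 // X1E /F /=.
  - by rewrite nbr_sum_Qst1 // X2E /F /=.
  - by rewrite nbr_sum_Qst2 // /F /=.
  - by rewrite nbr_sum_Qst3 // /F /=.
have [i_lt1|i_ge1] := ltnP i (s + 4).
  by rewrite nbr_sum_Qst_pendant1 ?(F_pendant1 i) ?i_ge4 // /F /=.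
have [i_lt2|i_ge2] := ltnP i (s + t + 4).
  by rewrite nbr_sum_Qst_pendant2 ?(F_pendant2 i) ?i_ge1 // /F /=.
by rewrite nbr_sum_Qst_isolated ?(F_isolated i) ?i_ge2 // mulr0 subr0.
Qed.
End QstEigenvalues.

Lemma Q1_Qst p : Q1 (p + 4) = Qst p 0.
Proof.
rewrite /Q1 /Qst; congr sym_edge; apply/funext => i; apply/funext => j.
rewrite /Q1_base /Qst_base addn0 (_ : (p + 4 <= j < p + 4)%N = false) ?andbF ?orbF //.
by apply/negbTE; rewrite negb_and -ltnNge orbN.
Qed.

Lemma Qst_p0_eigenvalue (R : realFieldType) (p N : nat) (r : R) :
  (p + 4 <= N)%N -> (2 <= p)%N -> charQ1 p%:R (N - (p + 4))%:R r = 0 ->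
  3%:R <= r -> eigenvalue (signed_adj R N (Qst p 0)) (r - 1).
Proof.
move=> leN p_ge2 root_r r_ge3; have r_neq0 : r != 0 by rewrite gt_eqF //; lra.
have P_ge2 : 2%:R <= p%:R :> R by rewrite ler_nat.
set P : R := p%:R in P_ge2 root_r *; set M : R := (N - (p + 4))%N%:R in root_r.
(* The class equations with [w = z] (when t = 0 the vertices 1 and 3 have the
   same neighbours), solved up to scaling; the total [S] is consistent exactly
   when [r] is a root of charQ1. *)
pose u := r ^+ 3 - 2 * P * r ^+ 2 - 4%:R * r ^+ 2 + 16%:R * P.
pose w := r ^+ 3 - 4%:R * r ^+ 2 + 8%:R * P.
pose y := r ^+ 3 - 4%:R * r ^+ 2 - 4%:R * P * r.
pose S := r ^+ 4 - 4%:R * P * r ^+ 2 - 16%:R * r ^+ 2 + 32%:R * P.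
have w_gt0 : 0 < w.
  have -> : w = (r - 3%:R) * (r ^+ 2 - r - 3%:R) + (8%:R * P - 9%:R) by rewrite /w; ring.
  by rewrite ltr_wpDl ?mulr_ge0 ?subr_ge0 //; [rewrite expr2; nra | lra].
apply: (@Qst_class_eigenvalue R p 0 N _ (r - 1) u w y w
  ((S - 2 * u) / r) ((S - 2 * w) / r) (S / r) S); rewrite ?addn0 ?subrK //.
- apply/eqP; rewrite -subr_eq0 -/M; apply/eqP.
  transitivity (charQ1 P M r / r); last by rewrite root_r mul0r.
  by rewrite /u /w /y /S /charQ1 /P /M; field.
- by rewrite /u /w /S; field.
- by rewrite /u /w /y /S; field.
- by rewrite /u /w /y /S; ring.
- by rewrite /u /w /y /S; ring.
- by rewrite mulrC divfK.
- by rewrite mulrC divfK.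
- by rewrite mulrC divfK.
- by rewrite (gt_eqF w_gt0) orbT.
Qed.

Lemma charQ1_root_above_index (R : realType) (s t n : nat) :
  (1 <= s)%N -> (1 <= t)%N -> (s + t + 4 <= n)%N ->
  exists r, [/\ lambda1 (signed_adj R n (Qst s t)) + 1 < r, 3%:R <= r
    & charQ1 (s + t)%N%:R (n - (s + t + 4))%N%:R r = 0].
Proof.
move=> s_ge1 t_ge1 leN; set b := lambda1 _; set m := (n - _)%N.
have P_ge2 : 2%:R <= (s + t)%N%:R :> R by rewrite ler_nat; lia.
have M_ge0 : 0 <= m%:R :> R by [].
have [r0 r0_ge r0_root] := charQ1_root_ge P_ge2 M_ge0 (charQ1_le0 P_ge2 M_ge0).
have [b_small|b_large] := ltP (b + 1) ((s + t)%N%:R + m%:R + 1).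
  by exists r0; split; lra.
have [b_eig|b_eq0] := lambda1_eigenvalue_or0 (signed_adj R n (Qst s t)); last first.
  by move: b_large; rewrite /b b_eq0; lra.
have b_neg : charQ1 (s + t)%N%:R m%:R (b + 1) < 0.
  rewrite natrD; apply: charQ1_lt0_of_charQst_root; rewrite ?ler1n //; first by lra.
  by apply: Qst_eigenvalue_charQst => //; rewrite gt_eqF //; lra.
have [r r_ge r_root] := charQ1_root_ge P_ge2 M_ge0 (ltW b_neg).
exists r; split => //; last by lra.
rewrite lt_neqAle r_ge andbT; apply/eqP => b_eq_r.
by move: b_neg; rewrite b_eq_r r_root ltxx.
Qed.

Theorem corollary3p4 (R : realType) (s t n : nat) :
  (1 <= s)%N -> (1 <= t)%N -> (s + t + 4 <= n)%N ->
  lambda1 (signed_adj R n (Qst s t)) < lambda1 (signed_adj R n (Q1 (s + t + 4))).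
Proof.
move=> s_ge1 t_ge1 leN; rewrite Q1_Qst.
have [r [r_gt r_ge3 r_root]] := charQ1_root_above_index R s_ge1 t_ge1 leN.
have r_eig := Qst_p0_eigenvalue leN (leq_add s_ge1 t_ge1) r_root r_ge3.
by apply: lt_le_trans (lambda1_ge r_eig); lra.
Qed.
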